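(* Let $(L,\preceq)$ be a lattice with meet $\wedge$ and join $\vee$, and let $\delta$ be an equivalence relation on $L$. Then $\delta$ is a local congruence on $L$ if and only if, for all $a,b,c\in L$: whenever $(a,b)\in\delta$ and $a\wedge b\preceq c\preceq a\vee b$, we have $(a\vee c,\,b\vee c)\in\delta$ and $(a\wedge c,\,b\wedge c)\in\delta$.
   Context: Given a lattice $(L,\preceq)$, an equivalence relation $\delta$ on $L$ is called a local congruence if (i) each equivalence class of $\delta$ is a sublattice of $L$ (closed under $\wedge$ and $\vee$ of $L$), and (ii) each equivalence class of $\delta$ is convex (if $x,y$ belong to the class and $x\preceq z\preceq y$ with $z\in L$, then $z$ belongs to the class). *)

From mathcomp Require Import all_boot all_order.
Set Implicit Arguments. Unset Strict Implicit. Unset Printing Implicit Defensive.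
Import Order.Theory.
Local Open Scope order_scope.

Definition is_equivalence (T : Type) (delta : T -> T -> Prop) : Prop :=
  [/\ (forall x, delta x x),
      (forall x y, delta x y -> delta y x) &
      (forall x y z, delta x y -> delta y z -> delta x z)].

Definition eq_class (T : Type) (delta : T -> T -> Prop) (x : T) : T -> Prop :=
  fun y => delta x y.

Definition is_sublattice d (L : latticeType d) (S : L -> Prop) : Prop :=
  forall x y, S x -> S y -> S (x `&` y) /\ S (x `|` y).

Definition is_convex d (L : latticeType d) (S : L -> Prop) : Prop :=
  forall x y z, S x -> S y -> x <= z -> z <= y -> S z.

Definition local_congruence d (L : latticeType d) (delta : L -> L -> Prop) : Prop :=
  is_equivalence delta /\
  (forall x : L, is_sublattice (eq_class delta x) /\ is_convex (eq_class delta x)).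

From mathcomp Require Import all_boot all_order.
Import Order.Theory.
Local Open Scope order_scope.
Set Implicit Arguments.
Unset Strict Implicit.
Unset Printing Implicit Defensive.

(* If a and b are related and a /\ b <= c <= a \/ b, convexity puts c in the
   common class of a and b, which, being a sublattice, then contains a \/ c,
   b \/ c, a /\ c and b /\ c.  Conversely, the compatibility condition with
   c := a puts a \/ b and a /\ b in the class of a, and for related x <= y and
   x <= z <= y it relates z = x \/ z to y \/ z = y. *)

Section LocalCongruence.
Variables (d : Order.disp_t) (L : latticeType d) (delta : L -> L -> Prop).
Hypothesis delta_equiv : is_equivalence delta.

Definition interval_compatible : Prop :=
  forall a b c : L, delta a b -> a `&` b <= c <= a `|` b ->
    delta (a `|` c) (b `|` c) /\ delta (a `&` c) (b `&` c).

Let delta_refl x : delta x x.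
Proof. by case: delta_equiv. Qed.

Let delta_sym x y : delta x y -> delta y x.
Proof. by case: delta_equiv => _ + _; apply. Qed.

Let delta_trans x y z : delta x y -> delta y z -> delta x z.
Proof. by case: delta_equiv => _ _; apply. Qed.

Section FromLocalCongruence.
Hypothesis delta_local : local_congruence delta.

Lemma local_congruence_meet_join a b c :
  delta a b -> delta a c -> delta a (b `&` c) /\ delta a (b `|` c).
Proof. by have [_ /(_ a) [sub _]] := delta_local; apply: sub. Qed.

Lemma local_congruence_interval a b c :
  delta a b -> a `&` b <= c <= a `|` b -> delta a c.
Proof.
move=> ab /andP[abc cab]; have [_ /(_ a) [_ conv]] := delta_local.
have [aIb aUb] := local_congruence_meet_join (delta_refl a) ab.
exact: conv aIb aUb abc cab.
Qed.

Lemma local_congruence_compatible : interval_compatible.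
Proof.
move=> a b c ab abc; have ac := local_congruence_interval ab abc.
have bc : delta b c := delta_trans (delta_sym ab) ac.
have [aIc aUc] := local_congruence_meet_join (delta_refl a) ac.
have [bIc bUc] := local_congruence_meet_join (delta_refl b) bc.
split; first exact: delta_trans (delta_sym aUc) (delta_trans ab bUc).
exact: delta_trans (delta_sym aIc) (delta_trans ab bIc).
Qed.

End FromLocalCongruence.

Section FromCompatible.
Hypothesis delta_compat : interval_compatible.

Lemma compatible_meet_join a b :
  delta a b -> delta a (a `&` b) /\ delta a (a `|` b).
Proof.
move=> ab; have := delta_compat ab (c := a).
by rewrite leIl leUl joinxx meetxx meetC joinC => /(_ isT) [aUb aIb].
Qed.

Lemma compatible_sublattice x : is_sublattice (eq_class delta x).
Proof.
move=> y z xy xz; have [yIz yUz] := compatible_meet_join (delta_trans (delta_sym xy) xz).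
by split; apply: delta_trans xy _.
Qed.

Lemma compatible_convex x : is_convex (eq_class delta x).
Proof.
move=> y z w xy xz yw wz; have yz := delta_trans (delta_sym xy) xz.
have yz_le : y <= z := le_trans yw wz.
have := delta_compat yz (c := w).
rewrite (meet_l yz_le) (join_r yz_le) yw wz (join_r yw) (join_l wz) => /(_ isT) [wz' _].
exact: delta_trans xz (delta_sym wz').
Qed.

Lemma compatible_local_congruence : local_congruence delta.
Proof.
by split=> // x; split; [apply: compatible_sublattice | apply: compatible_convex].
Qed.

End FromCompatible.

End LocalCongruence.

Theorem proposition3p5 (d : Order.disp_t) (L : latticeType d)
    (delta : L -> L -> Prop) :
  is_equivalence delta ->
  (local_congruence delta <->
   (forall a b c : L, delta a b -> a `&` b <= c <= a `|` b ->
      delta (a `|` c) (b `|` c) /\ delta (a `&` c) (b `&` c))).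
Proof.
move=> delta_equiv; split.
- exact: local_congruence_compatible.
- exact: compatible_local_congruence.
Qed.
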